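(* Let $\mathcal K$ be a quantum channel on $n\times n$ matrices described by Kraus operators $K_1,\dots,K_d\in\mathbb C^{n\times n}$ (with $\mathcal K(\rho)=\sum_j K_j\rho K_j^\dagger$, $\sum_j K_j^\dagger K_j=I_n$). Then $$\cos^{-1}\left[\frac1n\sqrt{\sum_{j=1}^d\lvert\mathrm{Tr}(K_j)\rvert^2}\right]\le\lVert\mathcal K\rVert,$$ with $\cos^{-1}$ taking values in $[0,\pi]$.
   Context: For a unitary matrix $U$ of size $r$ with eigenvalues $e^{i\theta_j}$, $\theta_j\in(-\pi,\pi]$, its time-energy cost is $\lVert U\rVert=\max_{1\le j\le r}|\theta_j|$. For a quantum channel $\mathcal K$ acting on an $n$-dimensional system $A$, its time-energy cost is $\lVert\mathcal K\rVert=\inf_U\lVert U\rVert$, where the infimum is over all finite-dimensional ancilla systems $B$ with a fixed standard state $|0\rangle_B$ and all unitaries $U_{BA}$ on $B\otimes A$ such that $\mathcal K(\rho)=\mathrm{Tr}_B[U_{BA}(|0\rangle_B\langle 0|\otimes\rho_A)U_{BA}^\dagger]$ for all density matrices $\rho$ on $A$. *)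

From HB Require Import structures.
From mathcomp Require Import all_boot all_order all_algebra.
From mathcomp Require Import all_classical all_reals all_analysis.
From mathcomp Require Import complex mxtens.
Set Implicit Arguments. Unset Strict Implicit. Unset Printing Implicit Defensive.
Import Order.TTheory GRing.Theory Num.Theory.
Local Open Scope ring_scope.
Local Open Scope complex_scope.

Section QDefs.
Variable R : realType.
Local Notation C := R[i].

Definition adjmx {p q : nat} (A : 'M[C]_(p, q)) : 'M[C]_(q, p) :=
  (map_mx (@conjc R) A)^T.

Definition unitary_mx (r : nat) (U : 'M[C]_r) : Prop :=
  adjmx U *m U = 1%:M /\ U *m adjmx U = 1%:M.

Definition density_mx (n : nat) (rho : 'M[C]_n) : Prop :=
  [/\ adjmx rho = rho,
      forall v : 'cV[C]_n, 0 <= (adjmx v *m rho *m v) 0 0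
    & \tr rho = 1].

Definition expi (t : R) : C := (cos t) +i* (sin t).

Definition unitary_cost (r : nat) (U : 'M[C]_r) : \bar R :=
  ereal_sup [set (`|t|)%:E | t in
     [set t : R | - pi < t <= pi /\ eigenvalue U (expi t)]]%classic.

Definition kraus_channel (n d : nat) (K : 'I_d -> 'M[C]_n) (rho : 'M[C]_n)
  : 'M[C]_n := \sum_(j < d) K j *m rho *m adjmx (K j).

(* partial trace over the ancilla B (first tensor factor, dimension m) *)
Definition ptrace_B (m n : nat) (M : 'M[C]_(m * n)) : 'M[C]_n :=
  \matrix_(a, a') \sum_(b < m) M (mxtens_index (b, a)) (mxtens_index (b, a')).

(* U_{BA} on B (x) A, ancilla B of dimension m.+1 with standard state |0>,
   realizes the channel Phi *)
Definition dilates (n m : nat) (Phi : 'M[C]_n -> 'M[C]_n)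
  (U : 'M[C]_(m.+1 * n)) : Prop :=
  unitary_mx U /\
  forall rho : 'M[C]_n, density_mx rho ->
    Phi rho = ptrace_B (U *m ((delta_mx ord0 ord0 : 'M[C]_m.+1) *t rho)
                          *m adjmx U).

Definition channel_cost (n : nat) (Phi : 'M[C]_n -> 'M[C]_n) : \bar R :=
  ereal_inf [set x : \bar R | exists (m : nat) (U : 'M[C]_(m.+1 * n)),
                 dilates Phi U /\ x = unitary_cost U]%classic.
End QDefs.

From HB Require Import structures.
From mathcomp Require Import all_boot all_order all_algebra.
From mathcomp Require Import all_classical all_reals all_analysis.
From mathcomp Require Import complex mxtens.
From mathcomp Require Import ring lra spectral.
Set Implicit Arguments. Unset Strict Implicit. Unset Printing Implicit Defensive.
Import Order.TTheory GRing.Theory Num.Theory.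
Local Open Scope ring_scope.

(* A unitary dilation U of the channel on B (x) A determines the channel, and
   evaluating sum_{a,b} K(E_ab)_{ab} once through the Kraus operators and once
   through U gives sum_j |tr K_j|^2 = sum_c |tr_A <c|U|0>|^2 >= (Re tr_A <0|U|0>)^2.
   The diagonal entries of the normal matrix U are convex combinations of its
   eigenvalues e^{i theta}, so the eigenvalue with the smallest real part satisfies
   n cos theta <= Re tr_A <0|U|0> <= sqrt (sum_j |tr K_j|^2), whence
   |theta| >= acos (sqrt (sum_j |tr K_j|^2) / n).  The completeness relation
   bounds sum_j |tr K_j|^2 by n^2, so the arccosine is evaluated inside [-1, 1]. *)

Section RealInequalities.
Variable R : realType.

Lemma sqr_sum_le n (F : 'I_n -> R) : (\sum_a F a) ^+ 2 <= n%:R * \sum_a F a ^+ 2.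
Proof.
have sum_sqr_diff : \sum_a \sum_b (F a - F b) ^+ 2 =
    (n%:R * \sum_a F a ^+ 2) *+ 2 - ((\sum_a F a) ^+ 2) *+ 2.
  transitivity (\sum_a \sum_b (F a ^+ 2 + F b ^+ 2 - (F a * F b) *+ 2)).
    by apply: eq_bigr => a _; apply: eq_bigr => b _; ring.
  rewrite expr2 mulr_suml.
  under eq_bigr => a _ do rewrite !sumrB big_split /= sumr_const card_ord.
  rewrite sumrB big_split /= sumr_const card_ord.
  congr (_ - _); first by rewrite sumrMnl mulr_natl mulr2n.
  under eq_bigr => a _ do rewrite sumrMnl.
  by rewrite sumrMnl; congr (_ *+ _); apply: eq_bigr => a _; rewrite mulr_sumr.
have : 0 <= \sum_a \sum_b (F a - F b) ^+ 2.
  by apply: sumr_ge0 => a _; apply: sumr_ge0 => b _; apply: sqr_ge0.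
by rewrite sum_sqr_diff subr_ge0 ler_pMn2r.
Qed.

Lemma acos_le_abs (x t : R) : -1 <= x <= 1 -> - pi < t <= pi -> cos t <= x ->
  acos x <= `|t|.
Proof.
move=> x_range /andP[t_gt t_le] cos_le.
have [/andP[acos_ge0 acos_le] cos_acos] := acos_def x_range.
rewrite leNgt; apply/negP => lt_acos.
have t_pi : `|t| <= pi by rewrite ler_norml t_le andbT ltW.
move: lt_acos; rewrite -(@ltr_cos R) ?in_itv /= ?normr_ge0 ?acos_ge0 //.
by rewrite cos_acos cos_norm ltNge cos_le.
Qed.

End RealInequalities.

Section ComplexMatrices.
Local Open Scope complex_scope.
Variable R : realType.
Local Notation C := R[i].
Local Notation normc := (@Normc.normc R).

Lemma ReD (x y : C) : complex.Re (x + y) = complex.Re x + complex.Re y.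
Proof. by case: x => a b; case: y => c d. Qed.

Lemma Re_sum I (r : seq I) (P : pred I) (F : I -> C) :
  complex.Re (\sum_(i <- r | P i) F i) = \sum_(i <- r | P i) complex.Re (F i).
Proof. exact: (big_morph _ ReD). Qed.

Lemma normc_ge0 (z : C) : 0 <= normc z.
Proof. by case: z => a b; apply: sqrtr_ge0. Qed.

Lemma normc_sqr (z : C) : normc z ^+ 2 = complex.Re z ^+ 2 + complex.Im z ^+ 2.
Proof. by case: z => a b /=; rewrite sqr_sqrtr // addr_ge0 // sqr_ge0. Qed.

Lemma mulcJ_normc (z : C) : z * z^* = (normc z ^+ 2)%:C.
Proof.
rewrite normc_sqr; case: z => a b; apply/eqP.
by rewrite eq_complex /=; apply/andP; split; apply/eqP; ring.
Qed.

Lemma sqr_Re_le_normc (z : C) : complex.Re z ^+ 2 <= normc z ^+ 2.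
Proof. by rewrite normc_sqr lerDl sqr_ge0. Qed.

Lemma normc_sum_le n (z : 'I_n -> C) : normc (\sum_a z a) <= \sum_a normc (z a).
Proof.
elim/big_ind2: _ => [|x r y s le_xr le_ys|a _]; first by rewrite Normc.normc0.
  exact: le_trans (le_normcD _ _) (lerD le_xr le_ys).
exact: lexx.
Qed.

Lemma normc_sqr_sum_le n (z : 'I_n -> C) :
  normc (\sum_a z a) ^+ 2 <= n%:R * \sum_a normc (z a) ^+ 2.
Proof.
apply: le_trans (sqr_sum_le (fun a => normc (z a))).
by rewrite ler_sqr ?nnegrE ?normc_ge0 ?sumr_ge0 ?normc_sum_le // => a _; rewrite normc_ge0.
Qed.

Lemma sum_mul_conj I J (rI : seq I) (rJ : seq J) (x : I -> C) (y : J -> C) :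
  \sum_(a <- rI) \sum_(b <- rJ) x a * (y b)^* =
  (\sum_(a <- rI) x a) * (\sum_(b <- rJ) y b)^*.
Proof. by rewrite rmorph_sum mulr_suml; apply: eq_bigr => a _; rewrite mulr_sumr. Qed.

Lemma unit_circle_expi (l : C) :
  l * l^* = 1 -> exists2 t, - pi < t <= pi & expi t = l.
Proof.
rewrite mulcJ_normc normc_sqr => /(congr1 (@complex.Re R)) /=.
case: l => a b /= ab_unit.
have a_range : -1 <= a <= 1 by apply/andP; split; nra.
have sqrt_b : Num.sqrt (1 - a ^+ 2) = `|b|.
  by rewrite -ab_unit addrAC subrr add0r sqrtr_sqr.
have acos_ge0 := acos_ge0 a_range; have pi_gt0 := @pi_gt0 R.
have [b_ge0|b_lt0] := leP 0 b.
  exists (acos a).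
    by rewrite acos_lepi // andbT; apply: lt_le_trans acos_ge0; rewrite oppr_lt0.
  by rewrite /expi acosK ?in_itv // sin_acos // sqrt_b ger0_norm.
exists (- acos a).
  suff : acos a < pi by move=> ?; apply/andP; split; lra.
  apply: acos_ltpi; case/andP: a_range => a_ge ->; rewrite andbT lt_neqAle a_ge andbT.
  by apply/eqP => a_eq; move: ab_unit b_lt0; rewrite -a_eq sqrrN expr1n; nra.
by rewrite /expi cosN sinN acosK ?in_itv // sin_acos // sqrt_b ltr0_norm // opprK.
Qed.

Lemma adjmxE p q (A : 'M[C]_(p, q)) i j : adjmx A i j = (A j i)^*.
Proof. by rewrite !mxE. Qed.

Lemma adjmx_trmxC p q (A : 'M[C]_(p, q)) : adjmx A = (A ^t*)%sesqui.
Proof. by rewrite /adjmx map_trmx. Qed.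

Lemma adjmxK p q (A : 'M[C]_(p, q)) : adjmx (adjmx A) = A.
Proof. by rewrite !adjmx_trmxC trmxCK. Qed.

Lemma adjmxM p q r (A : 'M[C]_(p, q)) (B : 'M[C]_(q, r)) :
  adjmx (A *m B) = adjmx B *m adjmx A.
Proof. by rewrite /adjmx map_mxM trmx_mul. Qed.

Lemma adjmxD p q (A B : 'M[C]_(p, q)) : adjmx (A + B) = adjmx A + adjmx B.
Proof. by apply/matrixP => i j; rewrite !mxE rmorphD. Qed.

Lemma adjmxZ p q c (A : 'M[C]_(p, q)) : adjmx (c *: A) = c^* *: adjmx A.
Proof. by apply/matrixP => i j; rewrite !mxE rmorphM. Qed.

Lemma adjmx_delta p q (i : 'I_p) (j : 'I_q) :
  adjmx (delta_mx i j : 'M[C]_(p, q)) = delta_mx j i.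
Proof. by apply/matrixP => x y; rewrite !mxE rmorph_nat andbC. Qed.

Lemma adjmx_mul_diag {p q} (A : 'M[C]_(p, q)) a :
  (adjmx A *m A) a a = (\sum_c normc (A c a) ^+ 2)%:C.
Proof.
rewrite mxE rmorph_sum; apply: eq_bigr => c _.
by rewrite adjmxE mulrC mulcJ_normc.
Qed.

Lemma mul_delta_adjmxE r s (A B : 'M[C]_(r, s)) p q x y :
  (A *m delta_mx p q *m adjmx B) x y = A x p * (B y q)^*.
Proof.
rewrite -(mul_delta_mx (0 : 'I_1)) mulmxA -colE -mulmxA -rowE mxE big_ord1.
by rewrite !mxE.
Qed.

Lemma unitary_normalmx r (U : 'M[C]_r) : unitary_mx U -> U \is normalmx.
Proof. by move=> [UtU UUt]; apply/normalmxP; rewrite -!adjmx_trmxC UtU UUt. Qed.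

Lemma unitary_eigenvalue_mulcJ r (U : 'M[C]_r) l :
  unitary_mx U -> eigenvalue U l -> l * l^* = 1.
Proof.
move=> [_ UUt] /eigenvalueP[v vU v_neq0].
have vvt_neq0 : (v *m adjmx v) 0 0 != 0 by rewrite adjmx_trmxC -dotmxE dnorm_eq0.
have : (v *m U) *m adjmx (v *m U) = v *m adjmx v.
  by rewrite adjmxM mulmxA -(mulmxA v) UUt mulmx1.
rewrite vU adjmxZ -scalemxAr -scalemxAl scalerA => /(congr1 (fun M : 'M[C]_1 => M 0 0)).
by rewrite mxE -[RHS]mul1r => /(mulIf vvt_neq0); rewrite mulrC.
Qed.

Lemma normal_eigenvalue_Re_le_diag N (A : 'M[C]_N) (i0 : 'I_N) :
  A \is normalmx ->
  exists2 l, eigenvalue A l & forall i, complex.Re l <= complex.Re (A i i).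
Proof.
move=> A_normal; set V := spectralmx A; set d := spectral_diag A.
have V_unitary : V \is unitarymx := spectral_unitarymx A.
have VVt : V *m adjmx V = 1%:M by rewrite adjmx_trmxC; apply/unitarymxP.
have VtV : adjmx V *m V = 1%:M.
  by move: V_unitary; rewrite -trmxC_unitary => /unitarymxP; rewrite trmxCK adjmx_trmxC.
have A_diag : A = adjmx V *m diag_mx d *m V.
  by move/orthomx_spectralP: A_normal; rewrite invmx_unitary // adjmx_trmxC.
have [k0 _ k0_min] := @arg_minP _ _ _ i0 xpredT (fun k => complex.Re (d 0 k)) isT.
exists (d 0 k0).
  apply/eigenvalueP; exists (row k0 V).
    have VA : V *m A = diag_mx d *m V by rewrite A_diag !mulmxA VVt mul1mx.
    by rewrite -row_mul VA row_mul row_diag_mx -scalemxAl -rowE.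
  apply/eqP => row0.
  have : (V *m adjmx V) k0 k0 = 1 by rewrite VVt mxE eqxx.
  rewrite mxE big1 => [/eqP|j _]; first by rewrite eq_sym oner_eq0.
  by have := congr1 (fun M : 'rV_N => M 0 j) row0; rewrite !mxE => ->; rewrite mul0r.
(* A i i is the convex combination of the d 0 k with weights |V k i|^2. *)
move=> i; have col_norm : \sum_k normc (V k i) ^+ 2 = 1.
  by have := adjmx_mul_diag V i; rewrite VtV mxE eqxx => /complexI.
rewrite -[X in X <= _]mulr1 -col_norm mulr_sumr A_diag mxE Re_sum.
apply: ler_sum => k _.
have -> : (adjmx V *m diag_mx d) i k * V k i = d 0 k * (V k i * (V k i)^*).
  by rewrite mul_mx_diag !mxE; ring.
rewrite mulcJ_normc; case: (d 0 k) (k0_min k isT) => a b /= a_min.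
by rewrite mulr0 subr0 ler_wpM2r // sqr_ge0.
Qed.

Lemma density_mx_outer {n} {v : 'cV[C]_n} {k : C} :
  0 < k -> adjmx v *m v = k%:M -> density_mx (k^-1 *: (v *m adjmx v)).
Proof.
move=> k_gt0 vtv; split.
- by rewrite adjmxZ adjmxM adjmxK conj_Creal // rpredV gtr0_real.
- move=> x; rewrite -scalemxAr -scalemxAl mxE.
  have -> : adjmx x *m (v *m adjmx v) *m x = adjmx (adjmx v *m x) *m (adjmx v *m x).
    by rewrite adjmxM adjmxK !mulmxA.
  have kV_ge0 : 0 <= k^-1 by rewrite invr_ge0 le_eqVlt k_gt0 orbT.
  rewrite adjmx_mul_diag mulr_ge0 // ler0c.
  by apply: sumr_ge0 => c _; apply: sqr_ge0.
- by rewrite mxtraceZ mxtrace_mulC vtv mxtrace_scalar mulVf ?gt_eqF.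
Qed.

Lemma density_mx_delta_eq0 n (V : lmodType C) (h : 'M[C]_n -> V) :
  {morph h : A B / A + B} -> (forall c A, h (c *: A) = c *: h A) ->
  (forall rho, density_mx rho -> h rho = 0) -> forall a b, h (delta_mx a b) = 0.
Proof.
move=> hD hZ h_density.
have h_outer (v : 'cV[C]_n) k : 0 < k -> adjmx v *m v = k%:M -> h (v *m adjmx v) = 0.
  move=> k_gt0 vtv; have /h_density := density_mx_outer k_gt0 vtv.
  by rewrite hZ => /eqP; rewrite scaler_eq0 invr_eq0 gt_eqF //= => /eqP.
pose e a : 'cV[C]_n := delta_mx a 0.
have delta11 : delta_mx 0 0 = 1%:M :> 'M[C]_1 by apply/matrixP => x y; rewrite !mxE !ord1.
have h_diag a : h (delta_mx a a) = 0.
  by have := h_outer (e a) 1 ltr01; rewrite adjmx_delta !mul_delta_mx delta11; apply.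
move=> a b; have [-> //|a_neq_b] := eqVneq a b.
(* Off the diagonal, use the projections onto e_a + e_b and e_a + i e_b. *)
have h_mix c : c^* *: h (delta_mx a b) + c *: h (delta_mx b a) = 0.
  pose v := e a + c *: e b.
  have vvt : v *m adjmx v = delta_mx a a + c^* *: delta_mx a b
                            + (c *: delta_mx b a + (c * c^*) *: delta_mx b b).
    by rewrite adjmxD adjmxZ !adjmx_delta mulmxDl !mulmxDr -!scalemxAl -!scalemxAr
               !mul_delta_mx scalerA.
  have vtv : adjmx v *m v = (1 + c * c^*)%:M.
    rewrite adjmxD adjmxZ !adjmx_delta mulmxDl !mulmxDr -!scalemxAl -!scalemxAr.
    rewrite !mul_delta_mx_cond eqxx (negbTE a_neq_b) eq_sym (negbTE a_neq_b).
    by rewrite !mulr0n !scaler0 addr0 add0r eqxx !mulr1n delta11 scalerA scalemx1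
               raddfD mulrC.
  have := h_outer v _ (ltr_pwDl ltr01 (mulcJ_ge0 c)) vtv.
  by rewrite vvt !hD !hZ !h_diag scaler0 add0r addr0.
have h_ba : h (delta_mx b a) = - h (delta_mx a b).
  by apply/esym/addr0_eq; have := h_mix 1; rewrite rmorph1 !scale1r.
have := h_mix 'i; rewrite h_ba scalerN -scalerBl => /eqP.
rewrite scaler_eq0 => /orP[|/eqP //].
by rewrite eq_complex /= -opprD oppr_eq0 -[1 + 1]/(2%:R) pnatr_eq0 andbF.
Qed.

Definition dilated_channel {m n} (U : 'M[C]_(m.+1 * n)) (rho : 'M[C]_n) : 'M[C]_n :=
  ptrace_B (U *m ((delta_mx 0 0 : 'M[C]_m.+1) *t rho) *m adjmx U).

(* tr_A (<c| U |c'>): the trace of the (c, c') block of U on B (x) A *)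
Definition block_trace {m n} (U : 'M[C]_(m * n)) (c c' : 'I_m) : C :=
  \sum_a U (mxtens_index (c, a)) (mxtens_index (c', a)).

Lemma kraus_channelD n d (K : 'I_d -> 'M[C]_n) :
  {morph kraus_channel K : A B / A + B}.
Proof.
move=> A B; rewrite /kraus_channel -big_split.
by apply: eq_bigr => j _; rewrite mulmxDr mulmxDl.
Qed.

Lemma kraus_channelZ n d (K : 'I_d -> 'M[C]_n) c A :
  kraus_channel K (c *: A) = c *: kraus_channel K A.
Proof.
rewrite /kraus_channel scaler_sumr.
by apply: eq_bigr => j _; rewrite -scalemxAr -scalemxAl.
Qed.

Lemma dilated_channelD m n (U : 'M[C]_(m.+1 * n)) :
  {morph dilated_channel U : A B / A + B}.
Proof.
move=> A B; rewrite /dilated_channel.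
have -> : (delta_mx 0 0 : 'M[C]_m.+1) *t (A + B) =
          delta_mx 0 0 *t A + delta_mx 0 0 *t B.
  by apply/matrixP => i j; rewrite !mxE mulrDr.
apply/matrixP => a a'; rewrite mulmxDr mulmxDl !mxE -big_split.
by apply: eq_bigr => b _; rewrite mxE.
Qed.

Lemma dilated_channelZ m n (U : 'M[C]_(m.+1 * n)) c A :
  dilated_channel U (c *: A) = c *: dilated_channel U A.
Proof.
rewrite /dilated_channel.
have -> : (delta_mx 0 0 : 'M[C]_m.+1) *t (c *: A) = c *: (delta_mx 0 0 *t A).
  by apply/matrixP => i j; rewrite !mxE mulrCA.
apply/matrixP => a a'; rewrite -scalemxAr -scalemxAl !mxE mulr_sumr.
by apply: eq_bigr => b _; rewrite mxE.
Qed.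

Lemma kraus_channel_deltaE n d (K : 'I_d -> 'M[C]_n) a b :
  kraus_channel K (delta_mx a b) a b = \sum_j K j a a * (K j b b)^*.
Proof. by rewrite summxE; apply: eq_bigr => j _; rewrite mul_delta_adjmxE. Qed.

Lemma dilated_channel_deltaE m n (U : 'M[C]_(m.+1 * n)) a b :
  dilated_channel U (delta_mx a b) a b =
  \sum_c U (mxtens_index (c, a)) (mxtens_index (0, a)) *
         (U (mxtens_index (c, b)) (mxtens_index (0, b)))^*.
Proof.
rewrite /dilated_channel.
have -> : (delta_mx 0 0 : 'M[C]_m.+1) *t (delta_mx a b : 'M[C]_n) =
          delta_mx (mxtens_index (0, a)) (mxtens_index (0, b)).
  apply/matrixP => i j.
  case: (mxtens_indexP i) => i1 i2; case: (mxtens_indexP j) => j1 j2.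
  rewrite tensmxE !mxE !(can_eq (@mxtens_indexK _ _)) !xpair_eqE.
  by do ! case: (_ == _) => //=; rewrite ?mulr1 ?mulr0.
by rewrite mxE; apply: eq_bigr => c _; rewrite mul_delta_adjmxE.
Qed.

Lemma dilation_trace_mulcJ {n d m} {K : 'I_d -> 'M[C]_n} {U : 'M[C]_(m.+1 * n)} :
  dilates (kraus_channel K) U ->
  \sum_j \tr (K j) * (\tr (K j))^* =
  \sum_c block_trace U c 0 * (block_trace U c 0)^*.
Proof.
move=> [_ K_dil].
have K_delta a b : kraus_channel K (delta_mx a b) = dilated_channel U (delta_mx a b).
  apply/eqP; rewrite -subr_eq0; apply/eqP; move: a b.
  apply: (@density_mx_delta_eq0 n _ (fun A => kraus_channel K A - dilated_channel U A)).
  - by move=> A B; rewrite kraus_channelD dilated_channelD addrACA opprD.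
  - by move=> c A; rewrite kraus_channelZ dilated_channelZ scalerBr.
  - by move=> rho /K_dil ->; rewrite subrr.
transitivity (\sum_a \sum_b kraus_channel K (delta_mx a b) a b).
  under eq_bigr => j _ do rewrite -sum_mul_conj.
  rewrite exchange_big; apply: eq_bigr => a _; rewrite exchange_big.
  by apply: eq_bigr => b _; rewrite kraus_channel_deltaE.
under eq_bigr => a _ do under eq_bigr => b _ do rewrite K_delta dilated_channel_deltaE.
under eq_bigr => a _ do rewrite exchange_big.
by rewrite exchange_big; apply: eq_bigr => c _; rewrite sum_mul_conj.
Qed.

Lemma Re_block_trace_le {n d m} {K : 'I_d -> 'M[C]_n} {U : 'M[C]_(m.+1 * n)} :
  dilates (kraus_channel K) U ->
  complex.Re (block_trace U 0 0) <= Num.sqrt (\sum_j normc (\tr (K j)) ^+ 2).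
Proof.
move=> K_dil.
have trace_sum : \sum_j normc (\tr (K j)) ^+ 2 = \sum_c normc (block_trace U c 0) ^+ 2.
  transitivity (complex.Re (\sum_j \tr (K j) * (\tr (K j))^*)).
    by rewrite Re_sum; apply: eq_bigr => j _; rewrite mulcJ_normc.
  rewrite (dilation_trace_mulcJ K_dil) Re_sum.
  by apply: eq_bigr => c _; rewrite mulcJ_normc.
apply: le_trans (ler_norm _) _.
rewrite -sqrtr_sqr ler_wsqrtr // trace_sum (bigD1 ord0) //=.
apply: le_trans (sqr_Re_le_normc _) _; rewrite lerDl.
by apply: sumr_ge0 => c _; apply: sqr_ge0.
Qed.

Lemma kraus_trace_sqr_le n d (K : 'I_d -> 'M[C]_n) :
  \sum_j adjmx (K j) *m K j = 1%:M -> \sum_j normc (\tr (K j)) ^+ 2 <= n%:R ^+ 2.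
Proof.
move=> kraus_id.
have col_norm a : \sum_j \sum_c normc (K j c a) ^+ 2 = 1.
  transitivity (complex.Re ((\sum_j adjmx (K j) *m K j) a a)).
    by rewrite summxE Re_sum; apply: eq_bigr => j _; rewrite adjmx_mul_diag.
  by rewrite kraus_id mxE eqxx.
apply: (@le_trans _ _ (\sum_j n%:R * \sum_a \sum_c normc (K j c a) ^+ 2)).
  apply: ler_sum => j _; apply: le_trans (normc_sqr_sum_le (fun a => K j a a)) _.
  rewrite ler_wpM2l // ler_sum // => a _.
  by rewrite (bigD1 a) //= lerDl sumr_ge0 // => c _; apply: sqr_ge0.
rewrite -mulr_sumr expr2 ler_wpM2l // exchange_big /=.
by under eq_bigr => a _ do rewrite col_norm; rewrite sumr_const card_ord.
Qed.

End ComplexMatrices.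

Theorem theorem2 (R : realType) (n d : nat) (K : 'I_d -> 'M[R[i]]_n) :
  (0 < n)%N ->
  \sum_(j < d) adjmx (K j) *m K j = 1%:M ->
  ((acos (n%:R^-1 * Num.sqrt (\sum_(j < d) Normc.normc (\tr (K j)) ^+ 2)))%:E
     <= channel_cost (kraus_channel K))%E.
Proof.
move=> n_gt0 kraus_id; set S := \sum_j _; set x := _ * _.
have n_pos : (0 : R) < n%:R by rewrite ltr0n.
have x_range : -1 <= x <= 1.
  have x_ge0 : 0 <= x by rewrite mulr_ge0 ?invr_ge0 ?sqrtr_ge0 ?ler0n.
  rewrite (le_trans _ x_ge0) ?lerN10 //= ler_pdivrMl // mulr1.
  by rewrite -[leRHS]ger0_norm ?ler0n // -sqrtr_sqr ler_wsqrtr // kraus_trace_sqr_le.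
apply: le_ereal_inf_tmp => _ [m [U [dilU ->]]].
have [l eig_l Re_l_le] := normal_eigenvalue_Re_le_diag
  (mxtens_index (0 : 'I_m.+1, Ordinal n_gt0)) (unitary_normalmx dilU.1).
have [t t_range expi_t] := unit_circle_expi (unitary_eigenvalue_mulcJ dilU.1 eig_l).
have t_le_cost : ((`|t|)%:E <= unitary_cost U)%E.
  rewrite /unitary_cost; apply: ereal_sup_ubound; exists t; last by [].
  by split; last by rewrite expi_t; exact: eig_l.
apply: le_trans t_le_cost; rewrite lee_fin; apply: acos_le_abs => //.
rewrite ler_pdivlMl //; apply: le_trans (Re_block_trace_le dilU).
have -> : cos t = complex.Re l by rewrite -expi_t.
rewrite /block_trace Re_sum -[n in n%:R]card_ord -sum1_card natr_sum mulr_suml.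
by apply: ler_sum => a _; rewrite mul1r Re_l_le.
Qed.
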